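(* Let $m\le n$, $1\le k\le m$, and let $X = X^*$ be a Hermitian operator on $\mathcal{H}_n\otimes\mathcal{H}_m$. Using the notation $\lambda_i^+$, $X^-$, $P_X^-$, $P_X^0$ defined in the context: 1. If $\|P_X^-\|_{S(k)} = 1$, then $X$ is not $k$-block positive. 2. Suppose $\|P_X^0 + P_X^-\|_{S(k)} < 1$ and \[ \lambda_i^+ \ge \frac{\|X^-\|_{S(k)}}{1 - \|P_X^0+P_X^-\|_{S(k)}} \quad \text{for all } i. \] Then $X$ is $k$-block positive. 3. Suppose $\|P_X^-\|_{S(k)} < 1$, all negative eigenvalues of $X$ are equal, $X$ is nonsingular, and \[ \lambda_i^+ < \frac{\|X^-\|_{S(k)}}{1-\|P_X^-\|_{S(k)}} \quad \text{for all } i. \] Then $X$ is not $k$-block positive.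
   Context: $\mathcal{H}_d=\mathbb{C}^d$ and $m\le n$. $SR$ denotes Schmidt rank, i.e. the number of nonzero singular values of the coefficient matrix of a vector in $\mathcal{H}_n\otimes\mathcal{H}_m$. $\|Y\|_{S(k)} := \sup\{|\langle w|Y|v\rangle| : |v\rangle,|w\rangle \text{ unit}, SR(|v\rangle),SR(|w\rangle)\le k\}$. A Hermitian $Y$ is $k$-block positive if $\langle v|Y|v\rangle\ge 0$ for all $|v\rangle$ with $SR(|v\rangle)\le k$. Equivalently, the map associated to $Y$ via the Choi–Jamiołkowski isomorphism is $k$-positive. For Hermitian $X$, fix an orthonormal eigenbasis: - the positive eigenvalues are $\lambda_i^+$ with eigenvectors $|v_i^+\rangle$; - the negative eigenvalues are $\lambda_i^-$ with eigenvectors $|v_i^-\rangle$; - the eigenvectors for eigenvalue $0$ are $|v_i^0\rangle$. Then $X^- := \sum_i \lambda_i^-|v_i^-\rangle\langle v_i^-|$, $P_X^- := \sum_i |v_i^-\rangle\langle v_i^-|$ is the projection onto the negative part, and $P_X^0 := \sum_i|v_i^0\rangle\langle v_i^0|$ is the projection onto the null space. *)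

From mathcomp Require Import all_boot all_order all_algebra.
From mathcomp Require Import complex.
From mathcomp Require Import boolp classical_sets reals.
Set Implicit Arguments. Unset Strict Implicit. Unset Printing Implicit Defensive.
Import Order.TTheory GRing.Theory Num.Theory.
Local Open Scope ring_scope.
Local Open Scope sesquilinear_scope.

Section Defs.
Variable R : realType.
Local Notation C := R[i].

(* A vector of H_n (x) H_m is represented by its coefficient matrix
   v : 'M[C]_(n,m), i.e. |v> = sum_{i,j} v i j |i>|j>.  Its column vector
   in C^(n*m) is [vec v]. *)
Definition vec n m (v : 'M[C]_(n, m)) : 'cV[C]_(n * m) := (mxvec v)^T.

Definition unit_vec n m (v : 'M[C]_(n, m)) : Prop :=
  \sum_(i < n) \sum_(j < m) `|v i j| ^+ 2 = 1.

(* Schmidt rank = number of nonzero singular values of the coefficient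
   matrix = rank of the coefficient matrix *)
Definition SR n m (v : 'M[C]_(n, m)) : nat := \rank v.

Definition braket n m (w : 'M[C]_(n, m)) (Y : 'M[C]_(n * m))
  (v : 'M[C]_(n, m)) : C := (((vec w) ^t* *m Y *m vec v) 0 0).

Definition normS n m (k : nat) (Y : 'M[C]_(n * m)) : R :=
  sup [set r : R | exists v w : 'M[C]_(n, m),
        [/\ unit_vec v, unit_vec w, (SR v <= k)%N, (SR w <= k)%N &
            r = Normc.normc (braket w Y v)]].

Definition hermmx N (Y : 'M[C]_N) : Prop := Y ^t* = Y.

Definition kblockpos n m (k : nat) (Y : 'M[C]_(n * m)) : Prop :=
  hermmx Y /\ forall v : 'M[C]_(n, m), (SR v <= k)%N -> 0 <= braket v Y v.

(* Given an orthonormal eigenbasis (columns of the unitary U) and real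
   eigenvalues d, the operator U diag(f) U^* *)
Definition specmx N (U : 'M[C]_N) (f : 'I_N -> C) : 'M[C]_N :=
  U *m diag_mx (\row_i f i) *m U ^t*.

Definition Xneg N (U : 'M[C]_N) (d : 'I_N -> R) : 'M[C]_N :=
  specmx U (fun i => if d i < 0 then (d i)%:C%C else 0).
Definition Pneg N (U : 'M[C]_N) (d : 'I_N -> R) : 'M[C]_N :=
  specmx U (fun i => if d i < 0 then 1 else 0).
Definition Pzero N (U : 'M[C]_N) (d : 'I_N -> R) : 'M[C]_N :=
  specmx U (fun i => if d i == 0 then 1 else 0).

End Defs.
Arguments normS {R} n m k Y.
Arguments kblockpos {R} n m k Y.

From mathcomp Require Import all_boot all_order all_algebra.
From mathcomp Require Import complex.
From mathcomp Require Import boolp classical_sets reals.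
From mathcomp Require Import lra.
Import Order.TTheory GRing.Theory Num.Theory.
Local Open Scope ring_scope.
Local Open Scope sesquilinear_scope.
Set Implicit Arguments. Unset Strict Implicit. Unset Printing Implicit Defensive.

(** Write [X = sum_i d_i |u_i><u_i|] and, for a vector [v], let [p_i = |<u_i|v>|^2]
    (its [weight]s), so that [<v|f(X)|v> = sum_i f(d_i) p_i] and
    [|<w|f(X)|v>| <= sum_i |f(d_i)| (p_i(w) + p_i(v)) / 2].  For [f >= 0] the
    S(k)-norm of [f(X)] is therefore the supremum of its diagonal values over unit
    vectors of Schmidt rank at most [k].
    If every negative eigenvalue is at most [-mu] and every other one at most [B],
    then [<v|X|v> <= B - (B + mu) <v|P_X^-|v>]; so k-block positivity forces
    [<v|P_X^-|v> <= B / (B + mu) < 1] for all such [v].  This refutes part 1, and in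
    part 3 (with [B] the largest positive eigenvalue and [X^- = -mu P_X^-]) it
    contradicts a near-maximiser of [<v|P_X^-|v>].  For part 2, with
    [L = ||X^-|| / (1 - ||P_X^0 + P_X^-||)] the assumed lower bound on the positive
    eigenvalues, [<v|X|v> >= L (1 - <v|P_X^0 + P_X^-|v>) + <v|X^-|v>
    >= L (1 - ||P_X^0 + P_X^-||) - ||X^-|| = 0]. *)

Section WeightedSpectrum.
Variables (R : realFieldType) (N : nat) (p : 'I_N -> R).
Hypothesis p_ge0 : forall i, 0 <= p i.

(* [%R] is needed in [(b)%R%:R] because [%:R] reads its argument in [nat_scope]. *)
Lemma sum_spectrum_le (d : 'I_N -> R) mu B :
  (forall i, d i < 0 -> d i <= - mu) -> (forall i, 0 <= d i -> d i <= B) ->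
  \sum_i d i * p i <= B * \sum_i p i - (B + mu) * \sum_i (d i < 0)%R%:R * p i.
Proof.
move=> dneg dnneg; rewrite !mulr_sumr -sumrB; apply: ler_sum => i _.
have := p_ge0 i; case: ltrP => [/dneg|/dnneg] hd hp /=; rewrite ?mul1r ?mul0r; nra.
Qed.

Lemma sum_spectrum_ge (d : 'I_N -> R) L :
  0 <= L -> (forall i, 0 < d i -> L <= d i) ->
  L * (\sum_i p i - \sum_i (d i <= 0)%R%:R * p i) + \sum_i (d i < 0)%R%:R * d i * p i
    <= \sum_i d i * p i.
Proof.
move=> L_ge0 dpos; rewrite -sumrB mulr_sumr -big_split; apply: ler_sum => i _.
have := p_ge0 i; have [hd|hd|->] := ltrgtP (d i) 0 => hp /=;
  rewrite ?mul1r ?mul0r ?subr0 ?subrr ?addr0 ?mulr0; [lra | | lra].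
by have := dpos i hd; nra.
Qed.

End WeightedSpectrum.

Section Braket.
Variable R : realType.
Local Notation C := R[i].
Local Notation normc := Normc.normc.

Definition rspecmx N (U : 'M[C]_N) (g : 'I_N -> R) : 'M[C]_N :=
  specmx U (fun i => (g i)%:C%C).

Definition coord n m (U : 'M[C]_(n * m)) (v : 'M[C]_(n, m)) : 'cV[C]_(n * m) :=
  U ^t* *m vec v.

Definition weight n m (U : 'M[C]_(n * m)) (v : 'M[C]_(n, m)) i : R :=
  normc (coord U v i 0) ^+ 2.

Definition mean n m (U : 'M[C]_(n * m)) (g : 'I_(n * m) -> R) v : R :=
  \sum_i g i * weight U v i.

Definition sqnorm n m (v : 'M[C]_(n, m)) : R := \sum_i \sum_j normc (v i j) ^+ 2.

Lemma normc_real (x : R) : normc x%:C%C = `|x|.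
Proof. by rewrite /Normc.normc /= expr0n /= addr0 sqrtr_sqr. Qed.

Lemma normc_norm (z : C) : (normc z)%:C%C = `|z|.
Proof. by []. Qed.

Lemma normc_ge0 (z : C) : 0 <= normc z.
Proof. by rewrite -lecR normc_norm rmorph0. Qed.

Lemma mul_conjC_normc (z : C) : z^* * z = (normc z ^+ 2)%:C%C.
Proof. by rewrite mulrC -normCK rmorphXn. Qed.

Lemma weight_ge0 n m (U : 'M[C]_(n * m)) v i : 0 <= weight U v i.
Proof. exact: sqr_ge0. Qed.

Lemma form_diag_mx N (a b : 'cV[C]_N) (f : 'I_N -> C) :
  (a^t* *m diag_mx (\row_i f i) *m b) 0 0 = \sum_i (a i 0)^* * f i * b i 0.
Proof. by rewrite mul_mx_diag !mxE; apply: eq_bigr => i _; rewrite !mxE. Qed.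

Lemma specmx_unit_neq0 N (U : 'M[C]_N) f i : specmx U f \in unitmx -> f i != 0.
Proof.
rewrite unitmxE !det_mulmx det_diag (bigD1 i) //= mxE.
by apply: contraTneq => ->; rewrite mul0r mulr0 mul0r unitr0.
Qed.

Lemma sqnorm_ge0 n m (v : 'M[C]_(n, m)) : 0 <= sqnorm v.
Proof. by apply: sumr_ge0 => i _; apply: sumr_ge0 => j _; exact: sqr_ge0. Qed.

Lemma braket_specmx n m (U : 'M[C]_(n * m)) f w v :
  braket w (specmx U f) v = \sum_i (coord U w i 0)^* * f i * coord U v i 0.
Proof.
by rewrite /braket /specmx /coord -form_diag_mx trmx_mul map_mxM trmxCK !mulmxA.
Qed.

Lemma braket_rspecmx_diag n m (U : 'M[C]_(n * m)) g v :
  braket v (rspecmx U g) v = (mean U g v)%:C%C.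
Proof.
rewrite braket_specmx rmorph_sum; apply: eq_bigr => i _.
by rewrite mulrAC mul_conjC_normc -!rmorphM mulrC.
Qed.

Lemma normc_braket_rspecmx_le n m (U : 'M[C]_(n * m)) g w v :
  normc (braket w (rspecmx U g) v) <=
  \sum_i `|g i| * (weight U w i + weight U v i) / 2.
Proof.
rewrite -lecR normc_norm braket_specmx rmorph_sum.
apply: le_trans (ler_norm_sum _ _ _) _; apply: ler_sum => i _.
rewrite !normrM norm_conjC -!normc_norm normc_real -!rmorphM lecR /weight.
set x := normc _; set y := normc _.
have := mulr_ge0 (normr_ge0 (g i)) (sqr_ge0 (x - y)).
have := normr_ge0 (g i); nra.
Qed.

Lemma normc_braket_rspecmx_nneg_le n m (U : 'M[C]_(n * m)) g w v :
  (forall i, 0 <= g i) ->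
  normc (braket w (rspecmx U g) v) <= (mean U g w + mean U g v) / 2.
Proof.
move=> g_ge0; apply: le_trans (normc_braket_rspecmx_le _ _ _ _) _.
rewrite /mean -big_split mulr_suml; apply: ler_sum => i _.
by rewrite ger0_norm // mulrDr.
Qed.

Lemma rspecmxZ N (U : 'M[C]_N) c g :
  rspecmx U (fun i => c * g i) = c%:C%C *: rspecmx U g.
Proof.
rewrite /rspecmx /specmx scalemxAl scalemxAr; congr (_ *m _ *m _).
by apply/matrixP => i j; rewrite !mxE rmorphM mulrnAr.
Qed.

Lemma braketZ n m (w v : 'M[C]_(n, m)) a (Y : 'M[C]_(n * m)) :
  braket w (a *: Y) v = a * braket w Y v.
Proof. by rewrite /braket -scalemxAr -scalemxAl mxE. Qed.

Lemma sum_weight n m (U : 'M[C]_(n * m)) v : U \is unitarymx ->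
  \sum_i weight U v i = sqnorm v.
Proof.
move=> uU; rewrite /sqnorm pair_bigA /=; apply: (@complexI R); rewrite !rmorph_sum.
transitivity (((coord U v)^t* *m coord U v) 0 0).
  by rewrite mxE; apply: eq_bigr => i _; rewrite /weight !mxE mul_conjC_normc.
rewrite /coord trmx_mul map_mxM trmxCK mulmxA -(mulmxA _ U) (unitarymxP uU) mulmx1.
rewrite mxE (reindex _ (curry_mxvec_bij _ _)) /=.
by apply: eq_bigr => -[i j] _; rewrite /vec !mxE mxvecE mul_conjC_normc.
Qed.

Lemma unit_vecE n m (v : 'M[C]_(n, m)) : unit_vec v <-> sqnorm v = 1.
Proof.
rewrite /unit_vec /sqnorm.
have -> : \sum_i \sum_j `|v i j| ^+ 2 = (\sum_i \sum_j normc (v i j) ^+ 2)%:C%C.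
  rewrite rmorph_sum; apply: eq_bigr => i _; rewrite rmorph_sum.
  by apply: eq_bigr => j _; rewrite -normc_norm rmorphXn.
by rewrite -(rmorph1 (real_complex R)); split => [/complexI|->].
Qed.

Lemma weight_le_sqnorm n m (U : 'M[C]_(n * m)) v i : U \is unitarymx ->
  weight U v i <= sqnorm v.
Proof.
move=> uU; rewrite -(sum_weight v uU) (bigD1 i) //= lerDl.
by apply: sumr_ge0 => j _; exact: weight_ge0.
Qed.

Lemma weightZ n m (U : 'M[C]_(n * m)) (a : R) v i :
  weight U (a%:C%C *: v) i = a ^+ 2 * weight U v i.
Proof.
rewrite /weight /coord /vec !linearZ /= mxE Normc.normcM normc_real.
by rewrite exprMn real_normK ?num_real.
Qed.

Lemma meanZ n m (U : 'M[C]_(n * m)) g (a : R) v :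
  mean U g (a%:C%C *: v) = a ^+ 2 * mean U g v.
Proof. by rewrite /mean mulr_sumr; apply: eq_bigr => i _; rewrite weightZ mulrCA. Qed.

Lemma sqnormZ n m (a : R) (v : 'M[C]_(n, m)) : sqnorm (a%:C%C *: v) = a ^+ 2 * sqnorm v.
Proof.
rewrite /sqnorm mulr_sumr; apply: eq_bigr => i _; rewrite mulr_sumr.
by apply: eq_bigr => j _; rewrite mxE Normc.normcM normc_real exprMn real_normK ?num_real.
Qed.

Lemma exists_unit_vec_SR1 n m : (0 < n)%N -> (0 < m)%N ->
  exists v : 'M[C]_(n, m), sqnorm v = 1 /\ (SR v <= 1)%N.
Proof.
move=> n_gt0 m_gt0; pose i0 := Ordinal n_gt0; pose j0 := Ordinal m_gt0.
have normc_delta i j : normc (delta_mx i0 j0 i j) ^+ 2 = ((i == i0) && (j == j0))%:R :> R.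
  by rewrite mxE; case: (_ && _); rewrite ?Normc.normc1 ?Normc.normc0 ?expr1n ?expr0n.
exists (delta_mx i0 j0); split; last by rewrite /SR mxrank_delta.
rewrite /sqnorm (bigD1 i0) // (bigD1 j0) //= normc_delta !eqxx /=.
rewrite big1 => [|j /negbTE j_neq]; last by rewrite normc_delta j_neq andbF.
rewrite addr0 big1 ?addr0 // => i /negbTE i_neq; apply: big1 => j _.
by rewrite normc_delta i_neq.
Qed.

Definition braket_bounded n m k (Y : 'M[C]_(n * m)) (M : R) :=
  forall v w : 'M[C]_(n, m), sqnorm v = 1 -> sqnorm w = 1 ->
    (SR v <= k)%N -> (SR w <= k)%N -> normc (braket w Y v) <= M.

Lemma braket_bounded_rspecmx n m k (U : 'M[C]_(n * m)) g : U \is unitarymx ->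
  braket_bounded k (rspecmx U g) (\sum_i `|g i|).
Proof.
move=> uU v w v1 w1 _ _; apply: le_trans (normc_braket_rspecmx_le _ _ _ _) _.
apply: ler_sum => i _; have := weight_le_sqnorm v i uU; have := weight_le_sqnorm w i uU.
rewrite v1 w1; have := normr_ge0 (g i); nra.
Qed.

End Braket.

Section NormS.
Variables (R : realType) (n m k : nat).
Hypotheses (n_gt0 : (0 < n)%N) (m_gt0 : (0 < m)%N) (k_gt0 : (0 < k)%N).
Local Notation C := R[i].
Local Notation normc := Normc.normc.
Local Open Scope classical_set_scope.

Let braket_set (Y : 'M[C]_(n * m)) := [set r : R | exists v w : 'M[C]_(n, m),
  [/\ unit_vec v, unit_vec w, (SR v <= k)%N, (SR w <= k)%N &
      r = normc (braket w Y v)]].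

Let braket_set_neq0 (Y : 'M[C]_(n * m)) : braket_set Y !=set0.
Proof.
have [v [v1 v_SR]] := exists_unit_vec_SR1 R n_gt0 m_gt0.
have v_unit : unit_vec v by exact/unit_vecE.
by exists (normc (braket v Y v)), v, v; split => //; exact: leq_trans v_SR k_gt0.
Qed.

Let braket_set_ub (Y : 'M[C]_(n * m)) M : braket_bounded k Y M -> ubound (braket_set Y) M.
Proof. by move=> YM r [v [w [v1 w1 v_SR w_SR ->]]]; apply: YM => //; exact/unit_vecE. Qed.

Lemma normS_le (Y : 'M[C]_(n * m)) M : braket_bounded k Y M -> normS n m k Y <= M.
Proof. by move=> YM; apply: ge_sup; [exact: braket_set_neq0 | exact: braket_set_ub]. Qed.

Lemma normS_bounded (Y : 'M[C]_(n * m)) M :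
  braket_bounded k Y M -> braket_bounded k Y (normS n m k Y).
Proof.
move=> YM v w v1 w1 v_SR w_SR; apply: (ub_le_sup (E := braket_set Y)).
  by exists M; exact: braket_set_ub.
by exists v, w; split => //; exact/unit_vecE.
Qed.

Lemma normS_adherent (Y : 'M[C]_(n * m)) M eps : braket_bounded k Y M -> 0 < eps ->
  exists v w : 'M[C]_(n, m), [/\ sqnorm v = 1, sqnorm w = 1, (SR v <= k)%N,
    (SR w <= k)%N & normS n m k Y - eps < normc (braket w Y v)].
Proof.
move=> YM eps_gt0.
have [_ [v [w [v1 w1 v_SR w_SR ->]]]] :=
  sup_adherent eps_gt0 (conj (braket_set_neq0 Y) (ex_intro _ M (braket_set_ub YM))).
by exists v, w; split => //; exact/unit_vecE.
Qed.

Lemma normS_scale_le (Y : 'M[C]_(n * m)) M a : braket_bounded k Y M ->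
  normS n m k (a *: Y) <= normc a * normS n m k Y.
Proof.
move=> YM; apply: normS_le => v w v1 w1 v_SR w_SR.
rewrite braketZ Normc.normcM ler_wpM2l ?normc_ge0 //.
exact: (normS_bounded YM v1 w1 v_SR w_SR).
Qed.

Lemma normS_rspecmx_nneg_le (U : 'M[C]_(n * m)) g M :
  U \is unitarymx -> (forall i, 0 <= g i) ->
  (forall v, sqnorm v = 1 -> (SR v <= k)%N -> mean U g v <= M) ->
  normS n m k (rspecmx U g) <= M.
Proof.
move=> uU g_ge0 gM; apply: normS_le => v w v1 w1 v_SR w_SR.
apply: le_trans (normc_braket_rspecmx_nneg_le _ _ _ g_ge0) _.
have := gM v v1 v_SR; have := gM w w1 w_SR.
by rewrite ler_pdivrMr // mulr_natr mulr2n; exact: lerD.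
Qed.

Lemma abs_mean_le_normS (U : 'M[C]_(n * m)) g v :
  U \is unitarymx -> sqnorm v = 1 -> (SR v <= k)%N ->
  `|mean U g v| <= normS n m k (rspecmx U g).
Proof.
move=> uU v1 v_SR; rewrite -normc_real -braket_rspecmx_diag.
exact: (normS_bounded (braket_bounded_rspecmx (k := k) g uU) v1 v1 v_SR v_SR).
Qed.

Lemma normS_rspecmx_nneg_adherent (U : 'M[C]_(n * m)) g eps :
  U \is unitarymx -> (forall i, 0 <= g i) -> 0 < eps ->
  exists v, [/\ sqnorm v = 1, (SR v <= k)%N &
    normS n m k (rspecmx U g) - eps < mean U g v].
Proof.
move=> uU g_ge0 eps_gt0.
have [v [w [v1 w1 v_SR w_SR]]] :=
  normS_adherent (braket_bounded_rspecmx (k := k) g uU) eps_gt0.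
move=> /lt_le_trans/(_ (normc_braket_rspecmx_nneg_le U w v g_ge0)) close.
have [wv|vw] := lerP (mean U g w) (mean U g v).
  by exists v; split => //; apply: lt_le_trans close (midf_le wv).2.
exists w; split => //; apply: lt_trans close _.
by rewrite addrC; exact: (midf_lt vw).2.
Qed.

End NormS.

Section Spectrum.
Variables (R : realType) (n m k : nat).
Hypotheses (n_gt0 : (0 < n)%N) (m_gt0 : (0 < m)%N) (k_gt0 : (0 < k)%N).
Local Notation C := R[i].
Variables (U : 'M[C]_(n * m)) (d : 'I_(n * m) -> R).
Hypothesis U_unitary : U \is unitarymx.

Lemma normS_rspecmx_le_sum g : normS n m k (rspecmx U g) <= \sum_i `|g i|.
Proof. by apply: normS_le => //; exact: braket_bounded_rspecmx. Qed.

Lemma Pneg_rspecmx : Pneg U d = rspecmx U (fun i => (d i < 0)%R%:R).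
Proof. by congr specmx; apply/funext => i; case: (d i < 0); rewrite ?rmorph1 ?rmorph0. Qed.

Lemma Xneg_rspecmx : Xneg U d = rspecmx U (fun i => (d i < 0)%R%:R * d i).
Proof.
by congr specmx; apply/funext => i; case: (d i < 0); rewrite ?mul1r ?mul0r ?rmorph0.
Qed.

Lemma Pzero_Pneg_rspecmx :
  Pzero U d + Pneg U d = rspecmx U (fun i => (d i <= 0)%R%:R).
Proof.
rewrite /Pzero /Pneg /rspecmx /specmx -mulmxDl -mulmxDr; congr (_ *m _ *m _).
apply/matrixP => i j; rewrite !mxE -mulrnDl; congr (_ *+ _).
by have [h|h|h] := ltrgtP (d i) 0; rewrite ?rmorph1 ?rmorph0 ?addr0 ?add0r.
Qed.

Lemma kblockpos_mean_ge0 v : kblockpos n m k (rspecmx U d) -> (SR v <= k)%N ->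
  0 <= mean U d v.
Proof.
by move=> [_ kbp] v_SR; rewrite -lecR rmorph0 -braket_rspecmx_diag; exact: kbp.
Qed.

Lemma kblockpos_rspecmx : hermmx (rspecmx U d) ->
  (forall v, sqnorm v = 1 -> (SR v <= k)%N -> 0 <= mean U d v) ->
  kblockpos n m k (rspecmx U d).
Proof.
move=> herm mean_ge0; split => // v v_SR; rewrite braket_rspecmx_diag lecR.
have [v0|v_neq0] := eqVneq (sqnorm v) 0.
  rewrite /mean big1 // => i _; apply/eqP; rewrite mulf_eq0 orbC eq_le weight_ge0.
  by rewrite -v0 weight_le_sqnorm.
have v_gt0 : 0 < sqnorm v by rewrite lt_def v_neq0 sqnorm_ge0.
pose a := (Num.sqrt (sqnorm v))^-1.
have a2 : a ^+ 2 = (sqnorm v)^-1 by rewrite exprVn sqr_sqrtr // ltW.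
have a_neq0 : a%:C%C != 0 :> C.
  by rewrite -(rmorph0 (real_complex R)) (inj_eq (@complexI R)) invr_eq0 sqrtr_eq0 -ltNge.
have := mean_ge0 (a%:C%C *: v); rewrite meanZ sqnormZ a2 mulVf ?v_neq0 // pmulr_rge0.
  by apply => //; rewrite /SR (eqmx_scale _ a_neq0).
by rewrite invr_gt0.
Qed.

Lemma mean_neg_le v mu B : kblockpos n m k (rspecmx U d) ->
  sqnorm v = 1 -> (SR v <= k)%N ->
  (forall i, d i < 0 -> d i <= - mu) -> (forall i, 0 <= d i -> d i <= B) ->
  0 < B + mu -> mean U (fun i => (d i < 0)%R%:R) v <= B / (B + mu).
Proof.
move=> kbp v1 v_SR d_neg d_nneg Bmu_gt0; rewrite ler_pdivlMr //.
have := sum_spectrum_le (weight_ge0 U v) d_neg d_nneg.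
rewrite sum_weight // v1 => mean_le; have := kblockpos_mean_ge0 kbp v_SR.
rewrite /mean in mean_le *; nra.
Qed.

Lemma normS_Pneg_lt1 : kblockpos n m k (rspecmx U d) -> normS n m k (Pneg U d) < 1.
Proof.
move=> kbp; rewrite Pneg_rspecmx.
have [[i0 di0_lt0]|no_neg] := pselect (exists i, d i < 0); last first.
  apply: le_lt_trans (normS_rspecmx_le_sum _) _; rewrite big1 ?ltr01 // => i _.
  have /negbTE -> : ~~ (d i < 0) by apply/negP => di_lt0; apply: no_neg; exists i.
  by rewrite normr0.
have [imax dimax_lt0 dimax_max] := arg_maxP (P := fun i => d i < 0) d di0_lt0.
set mu := - d imax; set L := \sum_i `|d i|.
have mu_gt0 : 0 < mu by rewrite oppr_gt0.
have d_le_L i : d i <= L.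
  rewrite /L (bigD1 i) //=; apply: le_trans (ler_norm _) _; rewrite lerDl.
  by apply: sumr_ge0 => j _; exact: normr_ge0.
have Lmu_gt0 : 0 < L + mu by rewrite ltr_wpDl // sumr_ge0 // => i _; exact: normr_ge0.
apply: (@le_lt_trans _ _ (L / (L + mu))).
  apply: normS_rspecmx_nneg_le => // v v1 v_SR.
  by apply: mean_neg_le => // i /dimax_max; rewrite /mu opprK.
by rewrite ltr_pdivrMr // mul1r ltrDl.
Qed.

Lemma kblockpos_of_pos_eigen_ge : hermmx (rspecmx U d) ->
  normS n m k (Pzero U d + Pneg U d) < 1 ->
  (forall i, 0 < d i ->
     normS n m k (Xneg U d) / (1 - normS n m k (Pzero U d + Pneg U d)) <= d i) ->
  kblockpos n m k (rspecmx U d).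
Proof.
rewrite Pzero_Pneg_rspecmx Xneg_rspecmx.
set Q := normS _ _ _ _; set s := normS _ _ _ _ => herm Q_lt1 d_pos.
apply: kblockpos_rspecmx => // v v1 v_SR.
have Q_ge := abs_mean_le_normS (fun i => (d i <= 0)%R%:R) U_unitary v1 v_SR.
have s_ge := abs_mean_le_normS (fun i => (d i < 0)%R%:R * d i) U_unitary v1 v_SR.
rewrite -/Q -/s in Q_ge s_ge.
have s_ge0 : 0 <= s := le_trans (normr_ge0 _) s_ge.
have L_ge0 : 0 <= s / (1 - Q) by rewrite divr_ge0 // subr_ge0 ltW.
have L_def : s / (1 - Q) * (1 - Q) = s by rewrite divfK // subr_eq0 gt_eqF.
have := sum_spectrum_ge (weight_ge0 U v) L_ge0 d_pos.
rewrite sum_weight // v1 -!/(mean _ _ _).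
move: Q_ge s_ge => /ler_normlP[_ Q_ge] /ler_normlP[s_ge _]; nra.
Qed.

Lemma normS_Xneg_le mu : 0 <= mu -> (forall i, d i < 0 -> d i = - mu) ->
  normS n m k (Xneg U d) <= mu * normS n m k (Pneg U d).
Proof.
move=> mu_ge0 d_neg; rewrite Xneg_rspecmx Pneg_rspecmx.
have -> : (fun i => (d i < 0)%R%:R * d i) = (fun i => - mu * (d i < 0)%R%:R).
  by apply/funext => i; case: ltrP => [/d_neg ->|]; rewrite ?mulr1 ?mulr0 ?mul1r ?mul0r.
rewrite rspecmxZ; apply: le_trans (normS_scale_le n_gt0 m_gt0 k_gt0 _ _) _.
  exact: (braket_bounded_rspecmx (k := k) _ U_unitary).
by rewrite normc_real normrN ger0_norm.
Qed.

Lemma exists_neg_eigen : normS n m k (Pneg U d) < 1 -> (forall i, d i != 0) ->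
  (forall i, 0 < d i -> d i < normS n m k (Xneg U d) / (1 - normS n m k (Pneg U d))) ->
  exists i, d i < 0.
Proof.
move=> Pneg_lt1 d_neq0 d_pos; have [//|no_neg] := pselect (exists i, d i < 0).
exfalso.
have d_gt0 i : 0 < d i.
  by rewrite lt_def d_neq0 leNgt; apply/negP => di_lt0; apply: no_neg; exists i.
have Xneg_le0 : normS n m k (Xneg U d) <= 0.
  rewrite Xneg_rspecmx; apply: le_trans (normS_rspecmx_le_sum _) _.
  by rewrite big1 // => i _; rewrite ltNge ltW ?d_gt0 // mul0r normr0.
have nm_gt0 : (0 < n * m)%N by rewrite muln_gt0 n_gt0 m_gt0.
pose i0 := Ordinal nm_gt0.
have Pneg1_gt0 : 0 < 1 - normS n m k (Pneg U d) by rewrite subr_gt0.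
have := d_pos i0 (d_gt0 i0); rewrite (ltr_pdivlMr _ _ Pneg1_gt0).
move=> /lt_le_trans/(_ Xneg_le0).
by rewrite pmulr_llt0 // ltNge (ltW (d_gt0 i0)).
Qed.

Lemma exists_pos_eigen mu : kblockpos n m k (rspecmx U d) -> (forall i, d i != 0) ->
  0 < mu -> (forall i, d i < 0 -> d i = - mu) -> exists i, 0 < d i.
Proof.
move=> kbp d_neq0 mu_gt0 d_neg; have [//|no_pos] := pselect (exists i, 0 < d i).
have d_mu i : d i = - mu.
  by apply: d_neg; rewrite lt_neqAle d_neq0 leNgt; apply/negP => ?; apply: no_pos; exists i.
have [v [v1 v_SR1]] := exists_unit_vec_SR1 R n_gt0 m_gt0.
have := kblockpos_mean_ge0 kbp (leq_trans v_SR1 k_gt0).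
rewrite /mean (eq_bigr (fun i => - mu * weight U v i)) => [|i _]; last by rewrite d_mu.
by rewrite -mulr_sumr sum_weight // v1 mulr1 oppr_ge0 leNgt mu_gt0.
Qed.

Lemma not_kblockpos_of_pos_eigen_lt : normS n m k (Pneg U d) < 1 ->
  (forall i j, d i < 0 -> d j < 0 -> d i = d j) -> (forall i, d i != 0) ->
  (forall i, 0 < d i -> d i < normS n m k (Xneg U d) / (1 - normS n m k (Pneg U d))) ->
  ~ kblockpos n m k (rspecmx U d).
Proof.
move=> Pneg_lt1 neg_eq d_neq0 d_pos kbp.
have [i1 di1_lt0] := exists_neg_eigen Pneg_lt1 d_neq0 d_pos.
set mu := - d i1.
have mu_gt0 : 0 < mu by rewrite oppr_gt0.
have d_neg i : d i < 0 -> d i = - mu by move=> di_lt0; rewrite opprK; exact: neg_eq.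
have [i2 di2_gt0] := exists_pos_eigen kbp d_neq0 mu_gt0 d_neg.
have [imax dimax_gt0 dimax_max] := arg_maxP (P := fun i => 0 < d i) d di2_gt0.
set B := d imax; set Pm := normS n m k (Pneg U d).
have Bmu_gt0 : 0 < B + mu by rewrite addr_gt0.
have Pm1_gt0 : 0 < 1 - Pm by rewrite subr_gt0.
have Pm_gt : B / (B + mu) < Pm.
  have := d_pos imax dimax_gt0; rewrite (ltr_pdivlMr _ _ Pm1_gt0).
  move=> /lt_le_trans/(_ (normS_Xneg_le (ltW mu_gt0) d_neg)).
  rewrite (ltr_pdivrMr _ _ Bmu_gt0) mulrBr mulr1 ltrBlDr.
  by rewrite mulrDr addrC [Pm * B]mulrC [Pm * mu]mulrC.
have eps_gt0 : 0 < Pm - B / (B + mu) by rewrite subr_gt0.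
have [v [v1 v_SR]] := normS_rspecmx_nneg_adherent n_gt0 m_gt0 k_gt0
  (g := fun i => (d i < 0)%R%:R) U_unitary (fun i => ler0n _ _) eps_gt0.
rewrite -Pneg_rspecmx -/Pm subKr ltNge => /negP; apply.
apply: mean_neg_le => // [i /d_neg -> // | i di_ge0].
by apply: dimax_max; rewrite lt_def d_neq0.
Qed.

End Spectrum.

Theorem theorem5p1 (R : realType) (n m k : nat)
  (X : 'M[R[i]]_(n * m)) (U : 'M[R[i]]_(n * m)) (d : 'I_(n * m) -> R) :
  (m <= n)%N -> (1 <= k)%N -> (k <= m)%N ->
  hermmx X ->
  U \is unitarymx ->
  X = specmx U (fun i => (d i)%:C%C) ->
  (* 1. *)
  (normS n m k (Pneg U d) = 1 -> ~ kblockpos n m k X) /\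
  (* 2. *)
  (normS n m k (Pzero U d + Pneg U d) < 1 ->
   (forall i, 0 < d i ->
      d i >= normS n m k (Xneg U d) / (1 - normS n m k (Pzero U d + Pneg U d))) ->
   kblockpos n m k X) /\
  (* 3. *)
  (normS n m k (Pneg U d) < 1 ->
   (forall i j, d i < 0 -> d j < 0 -> d i = d j) ->
   X \in unitmx ->
   (forall i, 0 < d i ->
      d i < normS n m k (Xneg U d) / (1 - normS n m k (Pneg U d))) ->
   ~ kblockpos n m k X).
Proof.
move=> le_mn k_gt0 le_km herm U_unitary X_def; subst X.
have m_gt0 : (0 < m)%N := leq_trans k_gt0 le_km.
have n_gt0 : (0 < n)%N := leq_trans m_gt0 le_mn.
split; [|split].
- move=> Pneg1 /(normS_Pneg_lt1 n_gt0 m_gt0 k_gt0 U_unitary).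
  by rewrite Pneg1 ltxx.
- exact: kblockpos_of_pos_eigen_ge.
- move=> Pneg_lt1 neg_eq X_unit; apply: not_kblockpos_of_pos_eigen_lt => // i.
  by apply: contraNneq (specmx_unit_neq0 i X_unit) => ->.
Qed.
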